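(* Let $n\geq2$, $p=2n-1$, $q=n$ and $k>\frac{2n-1}{n\sqrt{n-1}}$. Then the critical velocity is $$\overline{c}=\frac{kn+\sqrt{k^2n^2-4n}}{2n}.$$
   Context: Consider $u_t=u_{xx}+k(u^n)_x+u^p-u^q$; traveling waves $u=f(x+ct)$ satisfy $f''=cf'-knf^{n-1}f'-f^p+f^q$, equivalently the system $X'=Y$, $Y'=cY-knX^{n-1}Y-X^p+X^q$ ($X=f$, $Y=f'$) with critical points $P_1=(0,0)$, $P_2=(1,0)$. For each $c$, $l_c$ is the unique trajectory leaving $P_1$ (as $\xi\to-\infty$) into $\{X>0,Y>0\}$; it connects directly $P_1$ to $P_2$ if it tends to $P_2$ as $\xi\to\infty$ with $X>0,Y>0$ throughout. The critical velocity is $\overline{c}=\sup\{c: l_c\text{ connects directly }P_1\text{ and }P_2\}$. *)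

From Stdlib Require Import Reals.
From Coquelicot Require Import Coquelicot.
Open Scope R_scope.

Definition tw_solution (n p q : nat) (k c : R) (X Y : R -> R) : Prop :=
  forall t : R,
    is_derive X t (Y t) /\
    is_derive Y t (c * Y t - k * INR n * (X t) ^ (n - 1) * Y t
                   - (X t) ^ p + (X t) ^ q).

(* l_c connects directly P1 = (0,0) and P2 = (1,0): a trajectory leaving P1
   (as xi -> -oo), tending to P2 (as xi -> +oo), with X > 0, Y > 0 throughout.
   Since l_c is the unique trajectory leaving P1 into the open first quadrant,
   this is equivalent to the existence of such a trajectory. *)
Definition connects_directly (n p q : nat) (k c : R) : Prop :=
  exists X Y : R -> R,
    tw_solution n p q k c X Y /\
    (forall t, 0 < X t /\ 0 < Y t) /\
    is_lim X m_infty 0 /\ is_lim Y m_infty 0 /\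
    is_lim X p_infty 1 /\ is_lim Y p_infty 0.

Definition is_critical_velocity (n p q : nat) (k cbar : R) : Prop :=
  is_lub (fun c => connects_directly n p q k c) cbar.

From Stdlib Require Import Reals Lra Lia Psatz.
From Coquelicot Require Import Coquelicot.
Open Scope R_scope.

(** Let J = n - 1 and let cb be the larger root of
    n z^2 - k n z + 1 = 0; the bound on k makes it real and gives cb^2 J > 1.
    At speed cb the first-order reduction Y = cb (X - X^n) is invariant, and
    X = (1 + exp (- cb J t))^(-1/J) gives an explicit connection.
    For a connection at a speed c > cb, comparison arguments at -oo and +oo
    give cb (X - X^n) < Y < K (1 - X) with K = k n - c.  The ratio
    Y / (1 - X) then stays in (0, K), yet these two bounds force its
    derivative above a positive constant for large t, because
    K < 2 cb J and K cb J < (cb J)^2 + J. *)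

Lemma gt_lim_p_infty_of_derive_neg (f df : R -> R) (l : R) :
  (forall t, is_derive f t (df t)) -> (forall t, df t < 0) ->
  is_lim f p_infty l -> forall t, l < f t.
Proof.
  intros Hf Hdf Hl t.
  assert (Hdecr : forall x y, x < y -> f y < f x).
  { intros x y Hxy.
    enough (- f x < - f y) by lra.
    apply (incr_function (fun s => - f s) m_infty p_infty (fun s => - df s));
      try easy.
    - intros s _ _. now apply (is_derive_opp f).
    - intros s _ _. specialize (Hdf s). lra. }
  destruct (Rlt_or_le l (f t)) as [|Hle]; [assumption | exfalso].
  assert (Hgap : 0 < f t - f (t + 1)) by (specialize (Hdecr t (t + 1)); lra).
  apply is_lim_spec in Hl.
  destruct (Hl (mkposreal _ Hgap)) as [M HM]; simpl in HM.
  set (s := Rmax M (t + 1) + 1).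
  assert (HMs : M < s) by (unfold s; generalize (Rmax_l M (t + 1)); lra).
  assert (Hts : t + 1 < s) by (unfold s; generalize (Rmax_r M (t + 1)); lra).
  specialize (HM s HMs). specialize (Hdecr _ _ Hts).
  apply Rabs_def2 in HM. lra.
Qed.

Lemma exists_lt_left_of_derive_pos (f : R -> R) (t d : R) :
  is_derive f t d -> 0 < d -> exists s, s < t /\ f s < f t.
Proof.
  intros Hf Hd. apply is_derive_Reals in Hf.
  assert (Hd2 : 0 < d / 2) by lra.
  destruct (Hf (d / 2) Hd2) as [[del Hdel] Hq]; simpl in Hq.
  set (h := - (del / 2)).
  assert (Hh : h < 0) by (unfold h; lra).
  assert (Hh' : Rabs h < del) by (unfold h; rewrite Rabs_Ropp, Rabs_pos_eq; lra).
  specialize (Hq h ltac:(lra) Hh'). apply Rabs_def2 in Hq.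
  exists (t + h). split; [lra|].
  set (q := (f (t + h) - f t) / h) in Hq.
  assert (Hdiff : f (t + h) - f t = q * h) by (unfold q; field; lra).
  nra.
Qed.

Lemma exists_derive_eq_0_below (f df : R -> R) (a b c : R) :
  (forall t, is_derive f t (df t)) -> a <= c <= b -> f c < f a -> f c < f b ->
  exists x, f x <= f c /\ df x = 0.
Proof.
  intros Hf Hc Ha Hb.
  destruct (continuity_ab_min f a b) as [x [Hmin Hx]].
  { lra. }
  { intros y _. apply derivable_continuous_pt. exists (df y). apply is_derive_Reals, Hf. }
  assert (Hxc : f x <= f c) by now apply Hmin.
  assert (Hax : a < x) by (destruct (Req_dec x a); subst; lra).
  assert (Hxb : x < b) by (destruct (Req_dec x b); subst; lra).
  exists x. split; [assumption|].
  assert (pr : derivable_pt f x) by (exists (df x); apply is_derive_Reals, Hf).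
  rewrite <- (derive_pt_eq_0 f x (df x) pr) by apply is_derive_Reals, Hf.
  apply (deriv_minimum f a b x pr Hax Hxb). intros y Hay Hyb. apply Hmin. lra.
Qed.

Lemma pos_of_lim_m_infty_of_derive_pos (W dW : R -> R) :
  (forall t, is_derive W t (dW t)) -> (forall t, W t <= 0 -> 0 < dW t) ->
  is_lim W m_infty 0 -> forall t, 0 < W t.
Proof.
  intros HW Hd Hl t1.
  destruct (Rlt_or_le 0 (W t1)) as [|H1]; [assumption | exfalso].
  destruct (exists_lt_left_of_derive_pos W t1 (dW t1)) as [t2 [Ht21 H21]];
    auto.
  apply is_lim_spec in Hl.
  destruct (Hl (mkposreal (- W t2) ltac:(simpl; lra))) as [M HM]; simpl in HM.
  set (T := Rmin M t2 - 1).
  assert (HT : W t2 < W T).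
  { specialize (HM T ltac:(unfold T; generalize (Rmin_l M t2); lra)).
    apply Rabs_def2 in HM. lra. }
  destruct (exists_derive_eq_0_below W dW T t1 t2) as [x [Hx Hdx]]; auto.
  { unfold T; generalize (Rmin_r M t2); lra. }
  specialize (Hd x ltac:(lra)). lra.
Qed.

Lemma unbounded_of_derive_ge (f df : R -> R) (M d : R) :
  (forall t, is_derive f t (df t)) -> 0 < d -> (forall t, M < t -> d <= df t) ->
  forall B, exists t, B < f t.
Proof.
  intros Hf Hd Hdf B.
  set (t0 := M + 1).
  set (t := t0 + 2 * (Rabs B + Rabs (f t0)) / d + 1).
  assert (Hdist : d / 2 * (t - t0) = Rabs B + Rabs (f t0) + d / 2)
    by (unfold t; field; lra).
  assert (Ht0t : t0 < t).
  { enough (0 < d / 2 * (t - t0)) by nra.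
    rewrite Hdist. generalize (Rabs_pos B) (Rabs_pos (f t0)). lra. }
  assert (Hgrow : f t0 - d / 2 * t0 < f t - d / 2 * t).
  { apply (incr_function (fun s => f s - d / 2 * s) M p_infty
      (fun s => df s - d / 2 * 1)); try (simpl; unfold t0 in *; lra).
    - intros s _ _. apply (is_derive_minus f); [apply Hf|].
      apply is_derive_scal, (is_derive_id (K := R_AbsRing)).
    - intros s HMs _. specialize (Hdf s HMs). simpl in HMs. lra. }
  exists t. generalize (Rle_abs B) (Rle_abs (- f t0)). rewrite Rabs_Ropp. lra.
Qed.

Lemma is_lim_pow (f : R -> R) (x : Rbar) (l : R) (j : nat) :
  is_lim f x l -> is_lim (fun y => f y ^ j) x (l ^ j).
Proof.
  intros Hf. apply (is_lim_comp_continuous f (fun z => z ^ j)); [assumption|].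
  apply continuity_pt_filterlim, derivable_continuous_pt, derivable_pt_pow.
Qed.

Lemma mul_one_sub_pow_ge (x : R) (j : nat) :
  0 <= x <= 1 -> INR j * x ^ j * (1 - x) <= x * (1 - x ^ j).
Proof.
  intros Hx. induction j as [|j IH].
  - simpl. lra.
  - rewrite S_INR. simpl.
    assert (Hxj : 0 <= x ^ j) by (apply pow_le; lra).
    assert (x * x ^ j <= x ^ j) by nra.
    assert (INR j * (x * x ^ j) <= INR j * x ^ j)
      by (apply Rmult_le_compat_l; [apply pos_INR | lra]).
    nra.
Qed.

Lemma ratio_slope_ge (J K m s x p r a : R) :
  0 < x < 1 -> 0 < s < p -> 0 <= J -> 0 < m ->
  J * p * (1 - x) <= x * (1 - p) -> m * p < r -> K < 2 * m * s -> - K <= a ->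
  s * ((m ^ 2 + J) * s - K * m) <= a * r + x * p * (1 - p) / (1 - x) + r ^ 2.
Proof.
  intros Hx Hsp HJ Hm Hxp Hr HK Ha.
  assert (Hreact : J * s ^ 2 <= x * p * (1 - p) / (1 - x)).
  { set (q := x * p * (1 - p) / (1 - x)).
    assert (Hq : q * (1 - x) = p * (x * (1 - p))) by (unfold q; field; lra).
    assert (J * s ^ 2 * (1 - x) <= J * p ^ 2 * (1 - x)).
    { apply Rmult_le_compat_r; [lra|]. apply Rmult_le_compat_l; nra. }
    assert (p * (J * p * (1 - x)) <= p * (x * (1 - p)))
      by (apply Rmult_le_compat_l; lra).
    apply Rmult_le_reg_r with (1 - x); nra. }
  assert (Hms : m * s < r) by nra.
  assert (Hdrift : (m * s) ^ 2 - K * (m * s) <= r ^ 2 - K * r).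
  { assert (0 <= (r - m * s) * (r + m * s - K)) by (apply Rmult_le_pos; lra).
    nra. }
  assert (- K * r <= a * r) by (apply Rmult_le_compat_r; nra).
  nra.
Qed.

Lemma exists_lt_1_mul_gt (a b a' b' : R) :
  0 < a -> b < a -> 0 < a' -> b' < a' ->
  exists s, 0 < s < 1 /\ b < a * s /\ b' < a' * s.
Proof.
  intros Ha Hb Ha' Hb'.
  assert (Hq : b / a < 1 /\ b' / a' < 1).
  { split; [apply Rmult_lt_reg_r with a | apply Rmult_lt_reg_r with a'];
      try lra; unfold Rdiv; rewrite Rmult_assoc, Rinv_l; lra. }
  set (u := Rmax (Rmax (b / a) (b' / a')) 0).
  assert (Hu : u < 1) by (unfold u; repeat apply Rmax_lub_lt; lra).
  assert (Hbu : b / a <= u /\ b' / a' <= u /\ 0 <= u).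
  { unfold u. generalize (Rmax_l (Rmax (b / a) (b' / a')) 0)
      (Rmax_r (Rmax (b / a) (b' / a')) 0) (Rmax_l (b / a) (b' / a'))
      (Rmax_r (b / a) (b' / a')). lra. }
  exists ((1 + u) / 2). split; [lra|]. split.
  - replace b with (b / a * a) by (field; lra). nra.
  - replace b' with (b' / a' * a') by (field; lra). nra.
Qed.

Lemma critical_speed_root (N k cb : R) :
  2 <= N -> (2 * N - 1) / (N * sqrt (N - 1)) < k ->
  cb = (k * N + sqrt (k ^ 2 * N ^ 2 - 4 * N)) / (2 * N) ->
  0 < cb /\ k * N = N * cb + / cb /\ 1 < cb ^ 2 * (N - 1).
Proof.
  intros HN Hk Hcb.
  set (s := sqrt (N - 1)) in Hk.
  assert (Hs : 0 < s) by (apply sqrt_lt_R0; lra).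
  assert (Hss : s * s = N - 1) by (apply sqrt_sqrt; lra).
  assert (Hks : 2 * N - 1 < k * N * s).
  { replace (2 * N - 1) with ((2 * N - 1) / (N * s) * (N * s)) by (field; nra).
    replace (k * N * s) with (k * (N * s)) by ring.
    apply Rmult_lt_compat_r; nra. }
  set (D := k ^ 2 * N ^ 2 - 4 * N) in Hcb.
  assert (HD : 0 < D).
  { assert (Hsq : (2 * N - 1) ^ 2 < (k * N * s) ^ 2) by nra.
    unfold D. nra. }
  set (d := sqrt D) in Hcb.
  assert (Hd : 0 <= d) by apply sqrt_pos.
  assert (Hdd : d * d = D) by (apply sqrt_sqrt; lra).
  assert (E : 2 * N * cb = k * N + d) by (rewrite Hcb; field; lra).
  assert (Hk0 : 0 < k).
  { assert (HNs : 0 < N * s) by nra.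
    replace (k * N * s) with (k * (N * s)) in Hks by ring. nra. }
  assert (Hcb0 : 0 < cb) by nra.
  assert (Q : N * cb ^ 2 - k * N * cb + 1 = 0).
  { apply Rmult_eq_reg_l with (4 * N); [|lra].
    replace (4 * N * (N * cb ^ 2 - k * N * cb + 1))
      with ((2 * N * cb) ^ 2 - 2 * k * N * (2 * N * cb) + 4 * N) by ring.
    rewrite E. unfold D in Hdd. nra. }
  split; [assumption | split].
  - apply Rmult_eq_reg_r with cb; [|lra].
    replace ((N * cb + / cb) * cb) with (N * cb ^ 2 + 1) by (field; lra).
    lra.
  - (* cb * s is the larger root of N z^2 - k N s z + (N - 1), which is negative at 1 *)
    set (z := cb * s).
    assert (Hz : N * z ^ 2 - k * N * s * z + (N - 1) = 0).
    { replace (N * z ^ 2 - k * N * s * z + (N - 1))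
        with (s * s * (N * cb ^ 2 - k * N * cb + 1)) by (unfold z; rewrite <- Hss; ring).
      rewrite Q. ring. }
    assert (Hvertex : k * N * s <= 2 * N * z) by (unfold z; nra).
    assert (Hz1 : 1 < z).
    { destruct (Rlt_or_le 1 z) as [|Hle]; [assumption|].
      assert (0 <= (1 - z) * ((2 * N * z - k * N * s) + N * (1 - z)))
        by (apply Rmult_le_pos; nra).
      nra. }
    replace (cb ^ 2 * (N - 1)) with (z ^ 2) by (unfold z; rewrite <- Hss; ring).
    nra.
Qed.

Lemma tw_solution_succ (j : nat) (k c : R) (X Y : R -> R) :
  tw_solution (S j) (2 * S j - 1) (S j) k c X Y <->
  forall t, is_derive X t (Y t) /\
    is_derive Y t (c * Y t - k * (INR j + 1) * X t ^ j * Y t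
                   - X t * (X t ^ j) ^ 2 + X t * X t ^ j).
Proof.
  unfold tw_solution. rewrite S_INR.
  replace (S j - 1)%nat with j by lia.
  replace (2 * S j - 1)%nat with (S (j + j)) by lia.
  assert (Hp : forall x, x ^ S (j + j) = x * (x ^ j) ^ 2)
    by (intros x; simpl; rewrite pow_add; ring).
  split; intros H t; destruct (H t) as [HX HY]; split; try assumption;
    [rewrite <- Hp | rewrite Hp]; exact HY.
Qed.

Section FasterWave.

Variables (j : nat) (k cb c : R) (X Y : R -> R).
Local Notation J := (INR j).
Hypothesis Hj : (0 < j)%nat.
Hypothesis Hcb : 0 < cb.
Hypothesis Hk : k * (J + 1) = (J + 1) * cb + / cb.
Hypothesis Hcb2 : 1 < cb ^ 2 * J.
Hypothesis Htw : tw_solution (S j) (2 * S j - 1) (S j) k c X Y.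
Hypothesis Hpos : forall t, 0 < X t /\ 0 < Y t.
Hypothesis HX0 : is_lim X m_infty 0.
Hypothesis HY0 : is_lim Y m_infty 0.
Hypothesis HX1 : is_lim X p_infty 1.
Hypothesis HY1 : is_lim Y p_infty 0.

Let F (t : R) : R :=
  c * Y t - k * (J + 1) * X t ^ j * Y t - X t * (X t ^ j) ^ 2 + X t * X t ^ j.
Let HdX (t : R) : is_derive X t (Y t) :=
  proj1 (proj1 (tw_solution_succ j k c X Y) Htw t).
Let HdY (t : R) : is_derive Y t (F t) :=
  proj2 (proj1 (tw_solution_succ j k c X Y) Htw t).

Let kn_pos : 0 < k * (J + 1).
Proof.
  assert (0 < / cb) by (apply Rinv_0_lt_compat; lra).
  assert (0 <= J) by apply pos_INR.
  nra.
Qed.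

Lemma X_lt_1 (t : R) : X t < 1.
Proof.
  enough (0 < 1 - X t) by lra.
  apply (gt_lim_p_infty_of_derive_neg (fun t => 1 - X t) (fun t => 0 - Y t)).
  - intros s. apply (is_derive_minus (fun _ => 1) X);
      [apply (is_derive_const (V := R_NormedModule)) | apply HdX].
  - intros s. destruct (Hpos s). lra.
  - replace (Finite 0) with (Finite (1 - 1)) by (f_equal; ring).
    apply is_lim_minus'; [apply is_lim_const | exact HX1].
Qed.

Lemma pow_X_lt_1 (t : R) : 0 < X t ^ j < 1.
Proof.
  destruct (Hpos t) as [HX _]. split; [now apply pow_lt|].
  apply pow_lt_1_compat; [split; [lra | apply X_lt_1] | exact Hj].
Qed.

Lemma Y_lt_tail (t : R) : Y t < (k * (J + 1) - c) * (1 - X t).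
Proof.
  set (K := k * (J + 1) - c).
  enough (0 < K * (1 - X t) - Y t) by lra.
  apply (gt_lim_p_infty_of_derive_neg (fun t => K * (1 - X t) - Y t)
    (fun t => K * (0 - Y t) - F t)).
  - intros s. apply (is_derive_minus _ Y); [|apply HdY].
    apply is_derive_scal, (is_derive_minus (fun _ => 1) X);
      [apply (is_derive_const (V := R_NormedModule)) | apply HdX].
  - intros s. destruct (Hpos s). destruct (pow_X_lt_1 s).
    assert (0 < k * (J + 1) * (1 - X s ^ j) * Y s).
    { generalize kn_pos. intros.
      apply Rmult_lt_0_compat; [apply Rmult_lt_0_compat|]; lra. }
    assert (0 < X s * X s ^ j * (1 - X s ^ j))
      by (repeat apply Rmult_lt_0_compat; lra).
    unfold K, F. nra.
  - replace (Finite 0) with (Finite (K * (1 - 1) - 0)) by (f_equal; ring).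
    apply is_lim_minus'; [|exact HY1].
    apply (is_lim_scal_l _ K p_infty (1 - 1)).
    apply is_lim_minus'; [apply is_lim_const | exact HX1].
Qed.

Let ratio (t : R) : R := Y t / (1 - X t).
Let ratio' (t : R) : R := (F t * (1 - X t) - Y t * (0 - Y t)) / (1 - X t) ^ 2.

Lemma ratio_derive (t : R) : is_derive ratio t (ratio' t).
Proof.
  apply (is_derive_div Y (fun t => 1 - X t)); [apply HdY | | ].
  - apply (is_derive_minus (fun _ => 1) X);
      [apply (is_derive_const (V := R_NormedModule)) | apply HdX].
  - generalize (X_lt_1 t). lra.
Qed.

Section Faster.

Hypothesis Hc : cb < c.

Lemma Y_gt_front (t : R) : cb * (X t - X t ^ S j) < Y t.
Proof.
  enough (0 < Y t - cb * (X t - X t ^ S j)) by lra.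
  apply (pos_of_lim_m_infty_of_derive_pos (fun t => Y t - cb * (X t - X t ^ S j))
    (fun t => F t - cb * (Y t - INR (S j) * Y t * X t ^ j))).
  - intros s. apply (is_derive_minus Y); [apply HdY|].
    apply is_derive_scal, (is_derive_minus X); [apply HdX | apply is_derive_pow, HdX].
  - intros s Hs. destruct (Hpos s) as [HXs HYs]. destruct (pow_X_lt_1 s).
    assert (E : F s - cb * (Y s - INR (S j) * Y s * X s ^ j)
              = (c - cb) * Y s - X s ^ j / cb * (Y s - cb * (X s - X s ^ S j))).
    { unfold F. rewrite S_INR. simpl pow.
      replace (k * (J + 1)) with ((J + 1) * cb + / cb) by (rewrite <- Hk; ring).
      field. lra. }
    rewrite E.
    assert (0 <= X s ^ j / cb * - (Y s - cb * (X s - X s ^ S j))).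
    { apply Rmult_le_pos; [|lra]. apply Rlt_le, Rdiv_lt_0_compat; lra. }
    assert (0 < (c - cb) * Y s) by (apply Rmult_lt_0_compat; lra).
    lra.
  - replace (Finite 0) with (Finite (0 - cb * (0 - 0 ^ S j))) by (f_equal; simpl; ring).
    apply is_lim_minus'; [exact HY0|].
    apply (is_lim_scal_l _ cb m_infty (0 - 0 ^ S j)).
    apply is_lim_minus'; [exact HX0 | now apply is_lim_pow].
Qed.

Lemma ratio'_eventually_ge : exists M d, 0 < d /\ forall t, M < t -> d <= ratio' t.
Proof.
  set (K := k * (J + 1) - c). set (m := cb * J).
  assert (Hm : 0 < m) by (unfold m; nra).
  assert (Hinv : / cb < m).
  { unfold m. apply Rmult_lt_reg_r with cb; [lra|].
    rewrite Rinv_l by lra. nra. }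
  assert (HKm : K < k * (J + 1) - cb) by (unfold K; lra).
  assert (Hcrit : k * (J + 1) - cb = m + / cb) by (unfold m; rewrite Hk; ring).
  assert (Hmass : m ^ 2 + J = (k * (J + 1) - cb) * m).
  { rewrite Hcrit. unfold m. field. lra. }
  destruct (exists_lt_1_mul_gt (2 * m) K (m ^ 2 + J) (K * m))
    as [s [Hs [HKs HKms]]]; [lra | lra | nra | rewrite Hmass; nra |].
  assert (HP := is_lim_pow X p_infty 1 j HX1). rewrite pow1 in HP.
  apply is_lim_spec in HP.
  destruct (HP (mkposreal (1 - s) ltac:(simpl; lra))) as [M HM]; simpl in HM.
  exists M, (s * ((m ^ 2 + J) * s - K * m)). split; [nra|].
  intros t Ht. specialize (HM t Ht). apply Rabs_def2 in HM.
  destruct (Hpos t) as [HXt HYt]. destruct (pow_X_lt_1 t) as [HP0 HP1].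
  assert (HX1t := X_lt_1 t).
  assert (Hfront := Y_gt_front t). simpl pow in Hfront.
  assert (Hpoly := mul_one_sub_pow_ge (X t) j ltac:(split; lra)).
  replace (ratio' t) with ((c - k * (J + 1) * X t ^ j) * ratio t
    + X t * X t ^ j * (1 - X t ^ j) / (1 - X t) + ratio t ^ 2)
    by (unfold ratio', ratio, F; field; lra).
  apply ratio_slope_ge; try lra.
  - apply pos_INR.
  - unfold ratio, m.
    apply Rmult_lt_reg_r with (1 - X t); [lra|].
    replace (Y t / (1 - X t) * (1 - X t)) with (Y t) by (field; lra).
    nra.
  - unfold K. generalize kn_pos. nra.
Qed.

Lemma faster_wave_absurd : False.
Proof.
  destruct ratio'_eventually_ge as [M [d [Hd Hge]]].
  destruct (unbounded_of_derive_ge ratio ratio' M d ratio_derive Hd Hge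
    (k * (J + 1) - c)) as [t Ht].
  assert (HX := X_lt_1 t).
  assert (ratio t * (1 - X t) = Y t) by (unfold ratio; field; lra).
  generalize (Y_lt_tail t). nra.
Qed.

End Faster.

Lemma speed_le_critical : c <= cb.
Proof. apply Rnot_lt_le. exact faster_wave_absurd. Qed.

End FasterWave.

Lemma pow_exp (a : R) (j : nat) : exp a ^ j = exp (INR j * a).
Proof.
  induction j as [|j IH].
  - now rewrite Rmult_0_l, exp_0.
  - rewrite S_INR, <- tech_pow_Rmult, IH, <- exp_plus. f_equal. ring.
Qed.

Lemma is_lim_exp_neg_mul (m : R) : 0 < m ->
  is_lim (fun t => exp (- (m * t))) p_infty 0 /\
  is_lim (fun t => exp (- (m * t))) m_infty p_infty.
Proof.
  intros Hm.
  split; apply (is_lim_ext (fun t => exp (- m * t + 0)));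
    try (intros t; f_equal; ring); apply is_lim_comp_lin; try lra.
  - rewrite (is_Rbar_mult_unique (- m) p_infty m_infty); [apply is_lim_exp_m|].
    apply is_Rbar_mult_sym, is_Rbar_mult_p_infty_neg. simpl. lra.
  - rewrite (is_Rbar_mult_unique (- m) m_infty p_infty); [apply is_lim_exp_p|].
    apply is_Rbar_mult_sym, is_Rbar_mult_m_infty_neg. simpl. lra.
Qed.

Section Front.

Variables (j : nat) (cb : R).
Local Notation J := (INR j).
Hypothesis Hj : (0 < j)%nat.
Hypothesis Hcb : 0 < cb.

Let HJ : 0 < J.
Proof. now apply lt_0_INR. Qed.

Definition front (t : R) : R := exp (- ln (1 + exp (- (cb * J * t))) / J).

Lemma front_pos (t : R) : 0 < front t.
Proof. apply exp_pos. Qed.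

Lemma front_pow (t : R) : front t ^ j = / (1 + exp (- (cb * J * t))).
Proof.
  unfold front. rewrite pow_exp.
  replace (J * (- ln (1 + exp (- (cb * J * t))) / J))
    with (- ln (1 + exp (- (cb * J * t)))) by (field; lra).
  rewrite exp_Ropp, exp_ln; [reflexivity|].
  generalize (exp_pos (- (cb * J * t))). lra.
Qed.

Lemma front_pow_lt_1 (t : R) : front t ^ j < 1.
Proof.
  rewrite front_pow, <- Rinv_1. generalize (exp_pos (- (cb * J * t))). intros.
  apply Rinv_lt_contravar; lra.
Qed.

Lemma front_derive (t : R) : is_derive front t (cb * (front t - front t ^ S j)).
Proof.
  simpl pow. rewrite front_pow. unfold front. auto_derive.
  - generalize (exp_pos (- (cb * J * t))). lra.
  - unfold Rdiv. set (e := exp (- (cb * J * t))).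
    set (x := exp (- ln (1 + e) * / J)).
    assert (0 < e) by apply exp_pos.
    field. lra.
Qed.

Lemma front_lim_p_infty : is_lim front p_infty 1.
Proof.
  set (g := fun e => exp (- ln (1 + e) / J)).
  replace (Finite 1) with (Finite (g 0))
    by (unfold g; rewrite Rplus_0_r, ln_1, <- exp_0; do 2 f_equal; field; lra).
  apply (is_lim_comp_continuous _ g).
  - apply is_lim_exp_neg_mul. nra.
  - apply (ex_derive_continuous (K := R_AbsRing) (V := R_NormedModule)).
    unfold g. auto_derive. lra.
Qed.

Lemma front_lim_m_infty : is_lim front m_infty 0.
Proof.
  assert (Hln : is_lim (fun t => ln (1 + exp (- (cb * J * t)))) m_infty p_infty).
  { apply (is_lim_comp ln (fun t => 1 + exp (- (cb * J * t))) m_infty p_infty p_infty).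
    - apply is_lim_ln_p.
    - apply (is_lim_plus _ _ m_infty 1 p_infty p_infty);
        [apply is_lim_const | | reflexivity].
      apply is_lim_exp_neg_mul. nra.
    - now exists 0. }
  apply (is_lim_comp exp (fun t => - ln (1 + exp (- (cb * J * t))) / J)
    m_infty 0 m_infty).
  - apply is_lim_exp_m.
  - apply (is_lim_ext (fun t => (- / J) * ln (1 + exp (- (cb * J * t)))));
      [intros t; unfold Rdiv; ring|].
    assert (H := is_lim_scal_l _ (- / J) m_infty p_infty Hln).
    rewrite (is_Rbar_mult_unique (- / J) p_infty m_infty) in H; [exact H|].
    apply is_Rbar_mult_sym, is_Rbar_mult_p_infty_neg. simpl.
    assert (0 < / J) by (apply Rinv_0_lt_compat; lra). lra.
  - now exists 0.
Qed.

End Front.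

Lemma connects_directly_of_front (j : nat) (k cb : R) (X : R -> R) :
  0 < cb -> k * (INR j + 1) = (INR j + 1) * cb + / cb ->
  (forall t, is_derive X t (cb * (X t - X t ^ S j))) ->
  (forall t, 0 < X t /\ X t ^ j < 1) ->
  is_lim X m_infty 0 -> is_lim X p_infty 1 ->
  connects_directly (S j) (2 * S j - 1) (S j) k cb.
Proof.
  intros Hcb Hk HdX Hbounds HX0 HX1.
  set (Y := fun t => cb * (X t - X t ^ S j)).
  exists X, Y.
  split; [|split; [intros t; split | repeat split]].
  - apply tw_solution_succ. intros t. split; [apply HdX|].
    replace (cb * Y t - k * (INR j + 1) * X t ^ j * Y t - X t * (X t ^ j) ^ 2
             + X t * X t ^ j)
      with (cb * (Y t - INR (S j) * Y t * X t ^ j)).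
    + apply is_derive_scal, (is_derive_minus X); [apply HdX | apply is_derive_pow, HdX].
    + unfold Y. rewrite S_INR. simpl pow.
      replace (k * (INR j + 1)) with ((INR j + 1) * cb + / cb) by (rewrite <- Hk; ring).
      field. lra.
  - apply Hbounds.
  - destruct (Hbounds t) as [HX HP]. unfold Y. simpl pow.
    assert (0 < X t * (1 - X t ^ j)) by (apply Rmult_lt_0_compat; lra). nra.
  - exact HX0.
  - replace (Finite 0) with (Finite (cb * (0 - 0 ^ S j))) by (f_equal; simpl; ring).
    apply (is_lim_scal_l _ cb m_infty (0 - 0 ^ S j)).
    apply is_lim_minus'; [exact HX0 | now apply is_lim_pow].
  - exact HX1.
  - replace (Finite 0) with (Finite (cb * (1 - 1 ^ S j)))
      by (f_equal; rewrite pow1; ring).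
    apply (is_lim_scal_l _ cb p_infty (1 - 1 ^ S j)).
    apply is_lim_minus'; [exact HX1 | now apply is_lim_pow].
Qed.

Theorem mainTheorem13 (n : nat) (k : R) :
  (2 <= n)%nat ->
  k > (2 * INR n - 1) / (INR n * sqrt (INR n - 1)) ->
  is_critical_velocity n (2 * n - 1)%nat n k
    ((k * INR n + sqrt (k ^ 2 * INR n ^ 2 - 4 * INR n)) / (2 * INR n)).
Proof.
  intros Hn Hk. destruct n as [|j]; [lia|].
  assert (Hj : (0 < j)%nat) by lia.
  assert (HN : 2 <= INR (S j)) by (apply (le_INR 2); lia).
  set (cb := (k * INR (S j) + sqrt (k ^ 2 * INR (S j) ^ 2 - 4 * INR (S j)))
              / (2 * INR (S j))).
  destruct (critical_speed_root (INR (S j)) k cb HN Hk eq_refl) as (Hcb & Hkcb & Hcb2).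
  rewrite S_INR in Hkcb, Hcb2. replace (INR j + 1 - 1) with (INR j) in Hcb2 by ring.
  split.
  - intros c (X & Y & Htw & Hpos & HX0 & HY0 & HX1 & HY1).
    now apply (speed_le_critical j k cb c X Y).
  - intros b Hb.
    apply Hb, (connects_directly_of_front j k cb (front j cb)); try assumption.
    + apply front_derive; assumption.
    + intros t. split; [apply front_pos | apply front_pow_lt_1; assumption].
    + apply front_lim_m_infty; assumption.
    + apply front_lim_p_infty; assumption.
Qed.
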